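(* Let $E,m\ge1$ and consider the IEEE-754 floating-point format $\mathbb{F}^E_m=(1+E+m,\gamma,\phi)$ described in the context. For any distinct $b,b'\in\{0,1\}^{1+E+m}$ such that the set $\{\gamma(b),\gamma(b')\}$ is neither $\{0\}$ nor $\{\bot\}$, the following are equivalent: (i) $\phi^{-1}(b)<_{\mathrm{dict}}\phi^{-1}(b')$; (ii) $b<_{\mathbb{F}^E_m}b'$; (iii) $\gamma(b)<\gamma(b')$ in the order of the extended reals.
   Context: Extended reals: $\overline{\mathbb{R}}=\mathbb{R}\cup\{-\infty,+\infty,\bot\}$ with strict linear order $-\infty<x<x'<+\infty<\bot$ for reals $x<x'$ ($\bot$ is a special NaN value, the largest element). $<_{\mathrm{dict}}$ is the lexicographic order on bit strings of equal length. Floating-point value map $\gamma$ on strings $s\,e_E\ldots e_1\,f_1\ldots f_m$ with bias $b_E=2^{E-1}-1$ and $e=(e_E\ldots e_1)_2$: if $e=0$, $\gamma=(-1)^s(0.f_1\ldots f_m)_2\,2^{1-b_E}$; if $0<e<2^E-1$, $\gamma=(-1)^s(1.f_1\ldots f_m)_2\,2^{e-b_E}$; if $e=2^E-1$ and $f_1\ldots f_m=0^m$, $\gamma=(-1)^s\infty$; if $e=2^E-1$ and $f_1\ldots f_m\ne0^m$, $\gamma=\bot$. For $k\ge1$, the sign-magnitude map on $(k+1)$-bit strings is $\psi_k(0b_1\ldots b_k)=1\bar b_1\ldots\bar b_k$, $\psi_k(1b_1\ldots b_k)=0b_1\ldots b_k$ ($\bar b$ the complement bit). The bijection $\phi:\{0,1\}^{1+E+m}\to\{0,1\}^{1+E+m}$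 is: if $b\le_{\mathrm{dict}}1\,1^E0^m$, $\phi(b)=\psi_{E+m}(c)$ where $c$ is the $(1+E+m)$-bit binary representation of the integer $(b)_2+(2^m-1)$; otherwise $\phi(b)=b$. The order $<_{\mathbb{F}^E_m}$ on $\{0,1\}^{1+E+m}$ is defined by $b<_{\mathbb{F}^E_m}b'$ iff $\phi^{-1}(b)<_{\mathrm{dict}}\phi^{-1}(b')$. *)

From HB Require Import structures.
From mathcomp Require Import all_boot all_order all_algebra.
From mathcomp Require Import reals.
Set Implicit Arguments. Unset Strict Implicit. Unset Printing Implicit Defensive.
Import Order.TTheory GRing.Theory Num.Theory.
Local Open Scope ring_scope.

(* Extended reals  R ∪ {-oo, +oo, ⊥}  with  -oo < x < x' < +oo < ⊥. *)
Inductive xreal (R : realType) : Type :=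
| XNInf : xreal R
| XReal : R -> xreal R
| XPInf : xreal R
| XNaN  : xreal R.
Arguments XNInf {R}. Arguments XPInf {R}. Arguments XNaN {R}.

Definition xrank (R : realType) (x : xreal R) : nat :=
  match x with XNInf => 0 | XReal _ => 1 | XPInf => 2 | XNaN => 3 end.

Definition xlt (R : realType) (x y : xreal R) : Prop :=
  match x, y with
  | XReal a, XReal b => a < b
  | _, _ => (xrank x < xrank y)%N
  end.

Fixpoint dict_lt (s t : seq bool) : bool :=
  match s, t with
  | x :: s', y :: t' => (~~ x && y) || ((x == y) && dict_lt s' t')
  | _, _ => false
  end.
Definition dict_le (s t : seq bool) : bool := dict_lt s t || (s == t).

Definition bin_val (s : seq bool) : nat := foldl (fun acc (x : bool) => (acc.*2 + x)%N) 0%N s.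

Definition bin_repr (k n : nat) : k.-tuple bool :=
  [tuple odd (n %/ 2 ^ (k.-1 - i)) | i < k].

(* sign-magnitude map psi_k on (k+1)-bit strings:
   psi(0 b1..bk) = 1 ~b1..~bk,  psi(1 b1..bk) = 0 b1..bk. *)
Definition psi (n : nat) (c : n.-tuple bool) : n.-tuple bool :=
  let c0 := nth false c 0 in
  [tuple (if (i : nat) == 0%N then ~~ c0
          else if c0 then nth false c i else ~~ nth false c i) | i < n].

Definition fp_top (E m : nat) : (1 + E + m).-tuple bool :=
  [tuple ((i : nat) <= E)%N | i < 1 + E + m].

Definition fp_phi (E m : nat) (b : (1 + E + m).-tuple bool) : (1 + E + m).-tuple bool :=
  if dict_le b (fp_top E m)
  then psi (bin_repr (1 + E + m) (bin_val b + (2 ^ m - 1)))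
  else b.

(* phi^{-1} (phi is a bijection of the finite type of bit strings) *)
Definition fp_phi_inv (E m : nat) (b : (1 + E + m).-tuple bool) : (1 + E + m).-tuple bool :=
  odflt b [pick c | fp_phi c == b].

Definition fp_lt (E m : nat) (b b' : (1 + E + m).-tuple bool) : Prop :=
  dict_lt (fp_phi_inv b) (fp_phi_inv b').

Definition fp_gamma (R : realType) (E m : nat) (b : (1 + E + m).-tuple bool) : xreal R :=
  let s := nth false b 0 in
  let ebits := take E (drop 1 b) in
  let fbits := drop (1 + E) b in
  let e := bin_val ebits in
  let bias : int := (2 ^ (E - 1))%:Z - 1 in
  let frac : R := \sum_(i < m) (nth false fbits i)%:R / 2 ^+ i.+1 in
  let sgn : R := (-1) ^+ s in
  if e == 0%N then XReal (sgn * frac * 2 ^ (1 - bias))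
  else if (e < 2 ^ E - 1)%N then XReal (sgn * (1 + frac) * 2 ^ (e%:Z - bias))
  else if all (fun x => ~~ x) fbits then (if s then XNInf else XPInf)
  else XNaN.

From HB Require Import structures.
From mathcomp Require Import all_boot all_order all_algebra.
From mathcomp Require Import reals.
From mathcomp Require Import zify ring lra.
Import Order.TTheory GRing.Theory Num.Theory.

Set Implicit Arguments.
Unset Strict Implicit.
Unset Printing Implicit Defensive.

(* Reading bit strings as the integers they denote turns <_dict into < on codes,
   and phi into an explicit map on codes: it adds 2^m - 1 and applies psi, which
   sends the codes up to that of 1 1^E 0^m, in increasing order, to -oo, the
   negative floats by decreasing magnitude down to -0, then +0, the positive floats
   by increasing magnitude and +oo; the remaining codes are NaNs and are fixed.
   The magnitude of a nonnegative float is strictly increasing in its unsigned code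
   (subnormals and normals join up because the fraction sweeps a whole binade at
   each exponent), so gamma o phi is strictly increasing in the code, except that
   -0 and +0 collide and all NaNs are equal: exactly the excluded cases. *)

Lemma val_mktuple_nat (T : Type) (G : nat -> T) n :
  val [tuple G i | i < n] = map G (iota 0 n).
Proof. by rewrite /= -val_enum_ord -map_comp. Qed.

Lemma foldl_bin_val a s :
  foldl (fun acc (x : bool) => acc.*2 + x) a s = a * 2 ^ size s + bin_val s.
Proof.
elim: s a => [|x s IHs] a /=; first by rewrite /bin_val /= muln1 addn0.
by rewrite /bin_val /= IHs (IHs x) expnS; lia.
Qed.

Lemma bin_val_cons x s : bin_val (x :: s) = x * 2 ^ size s + bin_val s.
Proof. by rewrite {1}/bin_val /= foldl_bin_val. Qed.

Lemma bin_val_cat s t : bin_val (s ++ t) = bin_val s * 2 ^ size t + bin_val t.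
Proof. by rewrite {1}/bin_val foldl_cat foldl_bin_val. Qed.

Lemma bin_val_ltn s : bin_val s < 2 ^ size s.
Proof. by elim: s => [|x s IHs] //=; rewrite bin_val_cons expnS; case: x => /=; lia. Qed.

Lemma dict_lt_bin_val s t : size s = size t -> dict_lt s t = (bin_val s < bin_val t).
Proof.
elim: s t => [|x s IHs] [|y t] //= [st]; rewrite !bin_val_cons IHs // st.
by have := bin_val_ltn s; have := bin_val_ltn t; rewrite st; case: x; case: y => /=; lia.
Qed.

Lemma bin_val_inj s t : size s = size t -> bin_val s = bin_val t -> s = t.
Proof.
elim: s t => [|x s IHs] [|y t] //= [st]; rewrite !bin_val_cons st => eq_st.
have := bin_val_ltn s; have := bin_val_ltn t; rewrite st => lt_t lt_s.
have xy : x = y by case: x y eq_st {IHs} => [] [] /=; lia.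
by subst y; congr (_ :: _); apply: IHs => //; lia.
Qed.

Lemma bin_val_map_negb s : bin_val (map negb s) + bin_val s = 2 ^ size s - 1.
Proof.
elim: s => [|x s IHs] //=; rewrite !bin_val_cons size_map expnS.
by have := bin_val_ltn s; case: x => /=; lia.
Qed.

Lemma bin_val_eq0 s : (bin_val s == 0) = all negb s.
Proof.
elim: s => [|x s IHs] //=; rewrite bin_val_cons -IHs.
have : 0 < 2 ^ size s by rewrite expn_gt0.
by case: x => /=; lia.
Qed.

Lemma bin_val_nseq (x : bool) k : bin_val (nseq k x) = x * (2 ^ k - 1).
Proof.
elim: k => [|k IHk] /=; first by rewrite muln0.
rewrite bin_val_cons size_nseq IHk expnS {IHk}.
have : 0 < 2 ^ k by rewrite expn_gt0.
by case: x => /=; lia.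
Qed.

Lemma modn_exp2S n k : (n %/ 2) %% 2 ^ k * 2 + odd n = n %% 2 ^ k.+1.
Proof.
have n_eq := divn_eq n 2; rewrite modn2 in n_eq.
have := divn_eq (n %/ 2) (2 ^ k); have := ltn_pmod (n %/ 2) (expn_gt0 2 k).
set r := _ %% 2 ^ k; set q := _ %/ 2 ^ k => lt_r half_eq.
have -> : n = q * 2 ^ k.+1 + (r * 2 + odd n) by rewrite expnSr; lia.
by rewrite modnMDl modn_small // expnSr; case: (odd n) => /=; lia.
Qed.

Lemma bin_val_bin_repr k n : bin_val (bin_repr k n) = n %% 2 ^ k.
Proof.
rewrite (val_mktuple_nat (fun i => odd (n %/ 2 ^ (k.-1 - i)))).
elim: k n => [|k IHk] n; first by rewrite /= modn1.
rewrite (_ : iota 0 k.+1 = iota 0 k ++ [:: k]); last by rewrite -addn1 iotaD.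
rewrite map_cat bin_val_cat /= bin_val_cons /= subnn divn1 muln1 addn0.
have -> : [seq odd (n %/ 2 ^ (k - i)) | i <- iota 0 k] =
          [seq odd (n %/ 2 %/ 2 ^ (k.-1 - i)) | i <- iota 0 k].
  apply/eq_in_map => i; rewrite mem_iota add0n => lt_ik.
  by rewrite -divnMA -expnS; congr (odd (_ %/ 2 ^ _)); lia.
by rewrite IHk -modn_exp2S.
Qed.

Lemma bin_val_psi n (c : n.-tuple bool) : 0 < n ->
  bin_val (psi c) = if 2 ^ n.-1 <= bin_val c then bin_val c - 2 ^ n.-1
                    else 2 ^ n - 1 - bin_val c.
Proof.
move=> n_gt0; rewrite /psi (val_mktuple_nat (fun i =>
  if i == 0 then ~~ nth false c 0
  else if nth false c 0 then nth false c i else ~~ nth false c i)) /=.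
case: c n_gt0 => -[|x r] /= /eqP <- // _.
rewrite -[iota 0 _]/(0 :: iota (1 + 0) (size r)) iotaDl /= -map_comp /=.
have -> : [seq (if x then nth false r i else ~~ nth false r i) | i <- iota 0 (size r)] =
          if x then r else map negb r.
  case: x; first by rewrite -/(mkseq _ _) mkseq_nth.
  by rewrite (map_comp negb (nth false r)) -/(mkseq _ _) mkseq_nth.
rewrite !bin_val_cons; have := bin_val_ltn r; have := bin_val_map_negb r.
by rewrite expnS; case: x => /=; rewrite ?size_map => ? ?; case: ifP; lia.
Qed.

Lemma bin_val_fp_top E m : bin_val (fp_top E m) = 2 ^ (1 + E + m) - 2 ^ m.
Proof.
rewrite /fp_top (val_mktuple_nat (fun i => i <= E)) iotaD map_cat bin_val_cat.
have /all_pred1P -> : all (pred1 true) [seq i <= E | i <- iota 0 (1 + E)].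
  by apply/allP => x /mapP [i]; rewrite mem_iota => ? ->; rewrite /= eqb_id; lia.
have /all_pred1P -> : all (pred1 false) [seq i <= E | i <- iota (0 + (1 + E)) m].
  by apply/allP => x /mapP [i]; rewrite mem_iota => ? ->; rewrite /= eqbF_neg; lia.
by rewrite !size_map !size_iota !bin_val_nseq size_nseq mul0n addn0 mul1n mulnBl mul1n -expnD.
Qed.

Lemma bin_val_tuple_inj n : injective (fun s : n.-tuple bool => bin_val s).
Proof. by move=> s t; move/bin_val_inj => st; apply/val_inj/st; rewrite !size_tuple. Qed.

Lemma dict_lt_tuple n (s t : n.-tuple bool) : dict_lt s t = (bin_val s < bin_val t).
Proof. by apply: dict_lt_bin_val; rewrite !size_tuple. Qed.

Lemma dict_le_tuple n (s t : n.-tuple bool) : dict_le s t = (bin_val s <= bin_val t).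
Proof.
by rewrite /dict_le dict_lt_tuple (inj_eq val_inj) -(inj_eq (@bin_val_tuple_inj n))
  orbC -leq_eqVlt.
Qed.

Lemma bin_val_fp_ltn E m (c : (1 + E + m).-tuple bool) : bin_val c < 2 * 2 ^ (E + m).
Proof.
have -> : 2 * 2 ^ (E + m) = 2 ^ (1 + E + m) by rewrite -addnA add1n expnS.
by have := bin_val_ltn c; rewrite size_tuple.
Qed.

Definition phi_code (M P n : nat) : nat :=
  if n <= 2 * P - M then
    if P <= n + (M - 1) then n + (M - 1) - P else 2 * P - 1 - (n + (M - 1))
  else n.

Lemma bin_val_fp_phi E m (c : (1 + E + m).-tuple bool) :
  bin_val (fp_phi c) = phi_code (2 ^ m) (2 ^ (E + m)) (bin_val c).
Proof.
have two_P : 2 ^ (1 + E + m) = 2 * 2 ^ (E + m) by rewrite -addnA expnD.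
have c_lt := bin_val_fp_ltn c.
have M_le_P : 2 ^ m <= 2 ^ (E + m) by rewrite leq_pexp2l // leq_addl.
rewrite /fp_phi dict_le_tuple bin_val_fp_top two_P /phi_code; case: ifP => // c_le.
rewrite bin_val_psi ?bin_val_bin_repr ?two_P; last lia.
by rewrite modn_small -?addnA //; have := expn_gt0 2 m; lia.
Qed.

Lemma phi_code_inj M P n n' : 0 < M <= P -> n < 2 * P -> n' < 2 * P ->
  phi_code M P n = phi_code M P n' -> n = n'.
Proof. by move=> M_bds lt_n lt_n'; rewrite /phi_code; do ![case: ifP => ?]; lia. Qed.

Lemma fp_phi_inj E m : injective (@fp_phi E m).
Proof.
move=> c c' /(congr1 (fun s => bin_val (tval s))); rewrite !bin_val_fp_phi.
have bounds_M : 0 < 2 ^ m <= 2 ^ (E + m) by rewrite expn_gt0 leq_pexp2l // leq_addl.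
by move/(phi_code_inj bounds_M (bin_val_fp_ltn c) (bin_val_fp_ltn c'))/bin_val_tuple_inj.
Qed.

Lemma fp_phi_invK E m : cancel (@fp_phi_inv E m) (@fp_phi E m).
Proof.
move=> b; rewrite /fp_phi_inv; case: pickP => [c /eqP // | no_preimage].
case/codomP: (injF_onto (@fp_phi_inj E m) b) => c b_eq.
by have := no_preimage c; rewrite b_eq eqxx.
Qed.

(* Magnitude, in units of the smallest subnormal, of the nonnegative float whose
   exponent and fraction fields read [u = e * M + f] with [M = 2^m]: [f] if [e = 0],
   and [(M + f) * 2^(e-1)] otherwise. *)
Definition fp_mag (M u : nat) : nat :=
  if u < M then u else (M + u %% M) * 2 ^ (u %/ M).-1.

Lemma fp_mag_exp_frac M e f : f < M ->
  fp_mag M (e * M + f) = if e == 0 then f else (M + f) * 2 ^ e.-1.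
Proof.
move=> lt_fM; rewrite /fp_mag.
case: eqP => [-> | /eqP e_neq0]; first by rewrite mul0n add0n lt_fM.
have M_le : M <= e * M by rewrite leq_pmull // lt0n.
have -> : (e * M + f < M) = false by lia.
by rewrite modnMDl modn_small // divnMDl ?divn_small ?addn0 //; lia.
Qed.

Lemma fp_mag0 M : 0 < M -> fp_mag M 0 = 0.
Proof. by rewrite /fp_mag => ->. Qed.

Lemma fp_magS M u : 0 < M -> fp_mag M u < fp_mag M u.+1.
Proof.
move=> M_gt0; rewrite (divn_eq u M) -addnS fp_mag_exp_frac ?ltn_pmod //.
have := ltn_pmod u M_gt0; set e := u %/ M; set f := u %% M => lt_fM.
have [lt_f1M | f1_eq] := ltnP f.+1 M.
  by rewrite fp_mag_exp_frac //; case: eqP => // _; rewrite ltn_pmul2r ?expn_gt0 ?addnS.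
have -> : f.+1 = M by lia.
rewrite -[e * M + M]addn0 -mulSnr fp_mag_exp_frac //=.
case: eqP => [-> | e_neq0]; first by rewrite expn0 muln1; lia.
have -> : 2 ^ e = 2 * 2 ^ e.-1 by rewrite -expnS prednK // lt0n; apply/eqP.
by have := expn_gt0 2 e.-1; rewrite addn0; nia.
Qed.

Lemma fp_mag_lt M : 0 < M -> {homo fp_mag M : u v / u < v}.
Proof. by move=> M_gt0; apply: homo_ltn => [? ? ? | u]; [exact: ltn_trans | exact: fp_magS]. Qed.

Local Open Scope ring_scope.

Definition sm_value (R : realType) (M Q : nat) (c : R) (s : bool) (u : nat) : xreal R :=
  if (u < Q)%N then XReal ((-1) ^+ s * (fp_mag M u)%:R * c)
  else if u == Q then (if s then XNInf else XPInf) else XNaN.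

Definition code_value (R : realType) (M P : nat) (c : R) (v : nat) : xreal R :=
  if (P <= v)%N then sm_value M (P - M) c true (v - P) else sm_value M (P - M) c false v.

(* [gamma (phi c)] as a function of [n = (c)_2], for [Q] finite magnitudes per sign. *)
Definition rank_value (R : realType) (M Q : nat) (c : R) (n : nat) : xreal R :=
  if n == 0%N then XNInf
  else if (n <= Q)%N then XReal (- (fp_mag M (Q - n))%:R * c)
  else if (n <= Q + Q)%N then XReal ((fp_mag M (n - Q - 1))%:R * c)
  else if n == (Q + Q).+1 then XPInf else XNaN.

Lemma code_value_phi_code (R : realType) M P (c : R) n :
  (0 < M)%N -> (2 * M <= P)%N -> (n < 2 * P)%N ->
  code_value M P c (phi_code M P n) = rank_value M (P - M) c n.
Proof.
move=> M_gt0 M2_le_P n_lt.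
rewrite /phi_code; case: ifP => ?; [case: ifP => ? |].
all: rewrite /code_value /sm_value /rank_value; do ![case: ifP => ?]; try lia.
all: try done; congr (XReal (_ * c)); rewrite ?expr0 ?mul1r ?expr1 ?mulN1r.
all: first [congr (- (fp_mag M _)%:R) | congr ((fp_mag M _)%:R)]; lia.
Qed.

Lemma xlt_asym (R : realType) (x y : xreal R) : xlt x y -> ~ xlt y x.
Proof. by case: x => [|a||]; case: y => [|b||] //= /lt_trans lt_ab /lt_ab; rewrite ltxx. Qed.

Section RankValueOrder.
Variables (R : realType) (M Q : nat) (c : R).
Hypotheses (M_gt0 : (0 < M)%N) (Q_gt0 : (0 < Q)%N) (c_gt0 : 0 < c).

Let mag_gt0 u : (0 < u)%N -> 0 < (fp_mag M u)%:R :> R.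
Proof. by move=> u_gt0; rewrite ltr0n -(fp_mag0 M_gt0) fp_mag_lt. Qed.

Lemma rank_value_lt n n' : (n < n')%N ->
  ~ (rank_value M Q c n = XReal 0 /\ rank_value M Q c n' = XReal 0) ->
  ~ (rank_value M Q c n = XNaN /\ rank_value M Q c n' = XNaN) ->
  xlt (rank_value M Q c n) (rank_value M Q c n').
Proof.
rewrite /rank_value => lt_nn'; do ![case: ifP => ?]; try lia.
all: move=> not_zeros not_nans //=; rewrite ?ltr_pM2r //.
- by rewrite ltrN2 ltr_nat fp_mag_lt //; lia.
- have b_ge0 := ler0n R (fp_mag M (n' - Q - 1)).
  case: (posnP (Q - n)) => [a0 | /mag_gt0 a_gt0]; last lra.
  case: (posnP (n' - Q - 1)) => [b0 | /mag_gt0 b_gt0]; last by rewrite a0 fp_mag0 // oppr0.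
  by case: not_zeros; rewrite a0 b0 fp_mag0 // mulr0n oppr0 mul0r.
- by rewrite ltr_nat fp_mag_lt //; lia.
- by case: not_nans.
Qed.

Lemma rank_value_lt_iff n n' : n != n' ->
  ~ (rank_value M Q c n = XReal 0 /\ rank_value M Q c n' = XReal 0) ->
  ~ (rank_value M Q c n = XNaN /\ rank_value M Q c n' = XNaN) ->
  (n < n')%N <-> xlt (rank_value M Q c n) (rank_value M Q c n').
Proof.
move=> neq_nn' not_zeros not_nans; split=> [lt_nn' | lt_val].
  exact: rank_value_lt lt_nn' not_zeros not_nans.
case: (ltngtP n n') => // [lt_n'n | eq_nn']; last by rewrite eq_nn' eqxx in neq_nn'.
exfalso; apply: (xlt_asym lt_val); apply: rank_value_lt => // -[? ?].
  exact: not_zeros.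
exact: not_nans.
Qed.

End RankValueOrder.

Lemma sum_bit_fracs (R : realType) (s : seq bool) :
  \sum_(i < size s) (nth false s i)%:R / 2 ^+ i.+1 = (bin_val s)%:R / 2 ^+ size s :> R.
Proof.
have two_neq0 k : (2 : R) ^+ k != 0 by rewrite expf_neq0 // pnatr_eq0.
elim: s => [|x s IHs]; first by rewrite big_ord0 mul0r.
rewrite big_ord_recl bin_val_cons natrD natrM natrX.
under eq_bigr => i _ do rewrite /bump /= add0n exprS invfM mulrA mulrAC.
rewrite -mulr_suml IHs [nth _ _ 0]/= exprS expr0 mulr1 [size (x :: s)]/= exprS.
by field; rewrite two_neq0.
Qed.

(* The smallest positive subnormal, [2^(1 - b_E - m)]. *)
Definition fp_scale (R : realType) (E m : nat) : R :=
  2 ^ (1 - ((2 ^ (E - 1))%:Z - 1)) / 2 ^+ m.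

Lemma fp_scale_gt0 (R : realType) E m : 0 < fp_scale R E m.
Proof. by rewrite divr_gt0 // ?exprz_gt0 // exprn_gt0. Qed.

Lemma sm_value_exp_frac (R : realType) E m (s : bool) e f :
  (1 <= E)%N -> (e < 2 ^ E)%N -> (f < 2 ^ m)%N ->
  let bias : int := (2 ^ (E - 1))%:Z - 1 in
  let frac : R := f%:R / 2 ^+ m in
  sm_value (2 ^ m) (2 ^ (E + m) - 2 ^ m) (fp_scale R E m) s (e * 2 ^ m + f) =
  if e == 0%N then XReal ((-1) ^+ s * frac * 2 ^ (1 - bias))
  else if (e < 2 ^ E - 1)%N then XReal ((-1) ^+ s * (1 + frac) * 2 ^ (e%:Z - bias))
  else if f == 0%N then (if s then XNInf else XPInf) else XNaN.
Proof.
move=> E_gt0 e_lt f_lt bias frac.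
have two_neq0 k : (2 : R) ^+ k != 0 by rewrite expf_neq0 // pnatr_eq0.
have two_le : (2 <= 2 ^ E)%N by rewrite -{1}(expn1 2) leq_pexp2l.
have M_gt0 : (0 < 2 ^ m)%N by rewrite expn_gt0.
rewrite /sm_value /fp_scale /frac -/bias expnD.
have [-> | e_gt0] := posnP e.
  rewrite mul0n add0n ifT /fp_mag ?f_lt; last by nia.
  by congr XReal; field; rewrite two_neq0.
rewrite fp_mag_exp_frac // gtn_eqF //.
have [e_lt_max | e_max] := ltnP e (2 ^ E - 1).
  rewrite ifT; last by nia.
  congr XReal.
  have -> : (e%:Z - bias = (1 - bias) + e.-1%:Z)%R.
    by rewrite -{1}(prednK e_gt0) -addn1 PoszD; ring.
  rewrite [2 ^ (1 - bias + _)]expfzDr ?pnatr_eq0 // -exprnP natrM natrD !natrX.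
  by field; rewrite two_neq0.
have e_eq : e = (2 ^ E - 1)%N by lia.
rewrite ifF; last by nia.
suff -> : (e * 2 ^ m + f == 2 ^ E * 2 ^ m - 2 ^ m)%N = (f == 0%N) by [].
by apply/eqP/eqP; rewrite e_eq mulnBl mul1n; nia.
Qed.

Lemma fp_gamma_code_value (R : realType) E m (b : (1 + E + m).-tuple bool) :
  (1 <= E)%N -> fp_gamma R b = code_value (2 ^ m) (2 ^ (E + m)) (fp_scale R E m) (bin_val b).
Proof.
move=> E_gt0; rewrite /fp_gamma.
case: b => -[|x r] /= /eqP; first by rewrite -addnA add1n.
rewrite -addnA add1n => -[size_r]; rewrite drop0 add0n.
have size_f : size (drop E r) = m by rewrite size_drop size_r addKn.
have size_e : size (take E r) = E by rewrite size_takel // size_r leq_addr.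
have := sum_bit_fracs R (drop E r); rewrite size_f => ->.
rewrite -bin_val_eq0 bin_val_cons size_r.
have -> : bin_val r = (bin_val (take E r) * 2 ^ m + bin_val (drop E r))%N.
  by rewrite -{1}(cat_take_drop E r) bin_val_cat size_f.
have := bin_val_ltn (take E r); have := bin_val_ltn (drop E r); rewrite size_e size_f.
set e := bin_val (take E r); set f := bin_val (drop E r) => f_lt e_lt.
have u_lt : (e * 2 ^ m + f < 2 ^ (E + m))%N.
  by rewrite expnD; have := expn_gt0 2 m; nia.
rewrite -sm_value_exp_frac //; case: x => /=; rewrite /code_value.
  by rewrite mul1n leq_addr addKn.
by rewrite mul0n add0n leqNgt u_lt.
Qed.

Lemma fp_gamma_rank (R : realType) E m (b : (1 + E + m).-tuple bool) : (1 <= E)%N ->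
  fp_gamma R b = rank_value (2 ^ m) (2 ^ (E + m) - 2 ^ m) (fp_scale R E m)
                            (bin_val (fp_phi_inv b)).
Proof.
move=> E_gt0; rewrite -{1}(fp_phi_invK b) fp_gamma_code_value // bin_val_fp_phi.
apply: code_value_phi_code (bin_val_fp_ltn _); first by rewrite expn_gt0.
by rewrite expnD leq_pmul2r ?expn_gt0 // -{1}(expn1 2) leq_pexp2l.
Qed.

Theorem proposition5p8 (R : realType) (E m : nat) (hE : (1 <= E)%N) (hm : (1 <= m)%N)
  (b b' : (1 + E + m).-tuple bool) (hbb' : b != b')
  (hnot0 : ~ (fp_gamma R b = XReal 0 /\ fp_gamma R b' = XReal 0))
  (hnotNaN : ~ (fp_gamma R b = XNaN /\ fp_gamma R b' = XNaN)) :
  (dict_lt (fp_phi_inv b) (fp_phi_inv b') <-> fp_lt b b') /\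
  (fp_lt b b' <-> xlt (fp_gamma R b) (fp_gamma R b')).
Proof.
split; first by [].
have neq_pos : bin_val (fp_phi_inv b) != bin_val (fp_phi_inv b').
  apply: contra hbb' => /eqP/bin_val_tuple_inj eq_inv.
  by rewrite -(fp_phi_invK b) eq_inv fp_phi_invK.
rewrite /fp_lt dict_lt_tuple !(fp_gamma_rank R _ hE) in hnot0 hnotNaN *.
apply: rank_value_lt_iff => //; last exact: fp_scale_gt0.
  by rewrite expn_gt0.
by rewrite subn_gt0 ltn_exp2l // -{1}[m]add0n ltn_add2r.
Qed.
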